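(* Let $y\ge 1$ be an integer and $s\ge 0$ an integer. Consider the random walk on $\mathbb{Z}$ starting at $s$ whose steps are independent and equal to $+y$ or $-2$, each with probability $\tfrac12$, stopped at the first time it enters $\{0,1\}$ (if $s\in\{0,1\}$ it is stopped at time $0$). For $j\ge 0$ let $q_j(s)$ be the probability that the walk is eventually absorbed in $\{0,1\}$ having made exactly $j$ steps equal to $-2$, and let $F_s(z)=\sum_{j\ge 0}q_j(s)z^j$. Let $a=a(z)$ and $b=b(z)$ be the two roots of $x^{y+2}-2x^2+z=0$ that tend to $0$ as $z\to 0$ (the ''small roots''). Then, for $z$ sufficiently small, $$F_s(z)=\frac{(1-b)\,a^s+(a-1)\,b^s}{a-b}.$$ In particular, for $s=2$ this equals $a+b-ab$.
   Context: For $|z|$ small and positive the polynomial $x^{y+2}-2x^2+z$ has exactly two roots of modulus tending to $0$ as $z\to0$ (both of order $\sqrt{z/2}$). The other $y$ roots stay bounded away from $0$. The right-hand side is symmetric in $a$ and $b$. *)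

From HB Require Import structures.
From mathcomp Require Import all_boot all_order all_algebra.
From mathcomp Require Import all_classical all_reals all_analysis.
From mathcomp Require Import complex.
Set Implicit Arguments. Unset Strict Implicit. Unset Printing Implicit Defensive.
Import Order.TTheory GRing.Theory Num.Theory.
Import numFieldNormedType.Exports.
Local Open Scope ring_scope.

HB.instance Definition _ (R : rcfType) := PseudoPointedMetric.copy R[i] (R[i])^o.
HB.instance Definition _ (R : rcfType) := NormedModule.copy R[i] (R[i])^o.

(* A path of the walk is a finite word of steps: true = step +y, false = step -2. *)
Definition walk_pos (y s : nat) (w : seq bool) (i : nat) : int :=
  (s%:Z + (y%:Z) * (count id (take i w))%:Z - 2 * (count negb (take i w))%:Z)%R.

Definition in01 (x : int) : bool := (x == 0) || (x == 1).

Definition absorbed_exactly_at (y s n : nat) (w : n.-tuple bool) : bool :=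
  [forall i : 'I_n, ~~ in01 (walk_pos y s w i)] && in01 (walk_pos y s w n).

(* q_j(s): probability that the walk (independent fair steps +y / -2) started at s
   is absorbed in {0,1} having made exactly j steps equal to -2.  The event is the
   disjoint union over the absorption time n of the cylinder sets of the words w
   of length n with first entrance time n and j down-steps, each of probability 2^-n. *)
Definition qprob {R : realType} (y s j : nat) : R :=
  limn (fun N : nat => \sum_(0 <= n < N)
     \sum_(w : n.-tuple bool | absorbed_exactly_at y s w && (count negb w == j))
        (2 ^- n : R)).

Local Open Scope complex_scope.
Definition Fpartial {R : realType} (y s : nat) (z : R[i]) (N : nat) : R[i] :=
  \sum_(0 <= j < N) ((qprob y s j : R)%:C * z ^+ j).

(* Weight each path of the walk from s by z^(number of -2 steps) / 2^(length).  The
   total weight H_n(s) of the paths absorbed exactly at time n satisfies the one-step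
   recursion of the walk, and F_s(z) = sum_n H_n(s) for small z.  If r is a root of
   x^(y+2) - 2x^2 + z, then r^(s+y) + z r^(s-2) = 2 r^s, so r^s splits into the weight
   of r^X collected at absorption up to time N plus the weight still carried by the
   surviving paths, which is O(2^-N) for small r and z.  Absorption happens in {0,1},
   where the combination ((1-b) a^x + (a-1) b^x) / (a-b) equals 1; hence this
   combination at x = s is sum_n H_n(s). *)

From HB Require Import structures.
From mathcomp Require Import all_boot all_order all_algebra.
From mathcomp Require Import all_classical all_reals all_analysis.
From mathcomp Require Import complex.
From mathcomp Require Import zify ring lra.
Set Implicit Arguments. Unset Strict Implicit. Unset Printing Implicit Defensive.
Import Order.TTheory GRing.Theory Num.Theory.
Import numFieldNormedType.Exports.
Local Open Scope ring_scope.

Section Paths.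
Variable y : nat.

Definition walk_next (s : nat) (b : bool) : nat := if b then (s + y)%N else (s - 2)%N.

Lemma in01_nat (s : nat) : in01 s%:Z = (s <= 1)%N.
Proof. by case: s => [|[|s]]. Qed.

Lemma walk_pos0 s (w : seq bool) : walk_pos y s w 0 = s%:Z.
Proof. by rewrite /walk_pos take0 /= mulr0 subr0 addr0. Qed.

(* Outside {0,1} a -2 step does not leave the naturals, so the truncated
   subtraction in walk_next is harmless. *)
Lemma walk_pos_cons s b (w : seq bool) i : (1 < s)%N || b ->
  walk_pos y s (b :: w) i.+1 = walk_pos y (walk_next s b) w i.
Proof.
rewrite /walk_pos /walk_next; case: b; rewrite ?orbF => /= hs; first by rewrite !PoszD; lia.
by rewrite add0n PoszD; lia.
Qed.

Lemma absorbed_exactly_at0 s (w : 0.-tuple bool) :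
  absorbed_exactly_at y s w = (s <= 1)%N.
Proof.
rewrite /absorbed_exactly_at.
have -> : [forall i : 'I_0, ~~ in01 (walk_pos y s w i)] by apply/forallP => -[].
by rewrite (tuple0 w) walk_pos0 in01_nat.
Qed.

Lemma absorbed_exactly_at_cons s n b (w : n.-tuple bool) :
  absorbed_exactly_at y s (cons_tuple b w) =
  (1 < s)%N && absorbed_exactly_at y (walk_next s b) w.
Proof.
rewrite /absorbed_exactly_at; case: (leqP s 1) => hs /=.
  apply/negbTE/nandP; left; apply/forallPn; exists ord0.
  by rewrite walk_pos0 in01_nat hs.
have hsb : (1 < s)%N || b by rewrite hs.
rewrite walk_pos_cons //; congr (_ && _); apply/forallP/forallP => H i.
  by have := H (lift ord0 i); rewrite /= /bump /= add1n walk_pos_cons.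
case: i => [[|i] Hi] /=; first by rewrite walk_pos0 in01_nat -ltnNge.
by rewrite walk_pos_cons //; exact: (H (Ordinal (Hi : (i < n)%N))).
Qed.

End Paths.

Lemma big_tuple_cons (V : nmodType) n (P : pred (n.+1.-tuple bool))
    (F : n.+1.-tuple bool -> V) :
  \sum_(w | P w) F w =
  \sum_(b : bool) \sum_(t : n.-tuple bool | P (cons_tuple b t)) F (cons_tuple b t).
Proof.
rewrite pair_big_dep (reindex (fun p : bool * n.-tuple bool => cons_tuple p.1 p.2)) //.
exists (fun w => (thead w, behead_tuple w)) => [[b t] _|w _] /=.
  by rewrite theadE; congr (_, _); exact: val_inj.
by rewrite {3}(tuple_eta w); exact: val_inj.
Qed.

Section AbsorptionMass.
Variables (R : realType) (y : nat).

Definition absorb_mass (s n j : nat) : R :=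
  \sum_(w : n.-tuple bool | absorbed_exactly_at y s w && (count negb w == j)) 2 ^- n.

Lemma absorb_mass0 s j :
  absorb_mass s 0 j = if (s <= 1)%N && (j == 0)%N then 1 else 0.
Proof.
rewrite /absorb_mass (eq_bigl (fun _ => (s <= 1)%N && (j == 0)%N)); last first.
  by move=> w; rewrite absorbed_exactly_at0 (tuple0 w) /= eq_sym.
case: ifP => _; last by rewrite big_pred0.
by rewrite sumr_const card_tuple card_bool expr0 invr1.
Qed.

Lemma absorb_massS s n j : absorb_mass s n.+1 j =
  if (s <= 1)%N then 0 else
    (absorb_mass (s + y) n j + (if j is j'.+1 then absorb_mass (s - 2) n j' else 0)) / 2.
Proof.
rewrite /absorb_mass big_tuple_cons big_bool /=.
case: (leqP s 1) => hs.
  by rewrite !big_pred0 ?addr0 // => t; rewrite absorbed_exactly_at_cons ltnNge hs.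
rewrite mulrDl; congr (_ + _).
  rewrite mulr_suml; apply: eq_big => [t|t _].
    by rewrite absorbed_exactly_at_cons hs /= add0n.
  by rewrite exprS invfM mulrC.
case: j => [|j]; first by rewrite big_pred0 ?mul0r // => t; rewrite andbC.
rewrite mulr_suml; apply: eq_big => [t|t _].
  by rewrite absorbed_exactly_at_cons hs /= add1n eqSS.
by rewrite exprS invfM mulrC.
Qed.

Lemma absorb_mass_ge0_le1 n s j : 0 <= absorb_mass s n j <= 1.
Proof.
elim: n s j => [|n IH] s j; first by rewrite absorb_mass0; case: ifP; rewrite ?lexx ?ler01.
rewrite absorb_massS; case: ifP => _; first by rewrite lexx ler01.
by have := IH (s + y)%N j; case: j => [|j]; last have := IH (s - 2)%N j; lra.
Qed.

(* A path absorbed at time n with j down-steps ends at s + y (n - j) - 2 j <= 1. *)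
Lemma absorb_mass_eq0 n s j :
  ((y + 2) * j + 1 < y * n + s)%N || (n < j)%N -> absorb_mass s n j = 0.
Proof.
elim: n s j => [|n IH] s j.
  by rewrite absorb_mass0; case: ifP => // /andP[? /eqP ?]; lia.
move=> h; rewrite absorb_massS; case: ifP => // hs.
rewrite IH; last by lia.
by case: j h => [|j] h; rewrite ?IH ?addr0 ?mul0r //; lia.
Qed.

Lemma sum_absorb_mass_late s j M : (1 <= y)%N ->
  \sum_(3 * j + 2 <= n < M) absorb_mass s n j = 0.
Proof.
move=> hy; rewrite big_nat_cond big1 // => n /andP[/andP[hn _] _].
by apply: absorb_mass_eq0; apply/orP; left; nia.
Qed.

Lemma qprob_finite s j : (1 <= y)%N ->
  qprob y s j = \sum_(0 <= n < 3 * j + 2) absorb_mass s n j.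
Proof.
move=> hy; rewrite -[LHS]/(limn (fun N => \sum_(0 <= n < N) absorb_mass s n j)).
apply: cvg_lim => //; apply: cvg_near_cst; exists (3 * j + 2)%N => // N /= hN.
by rewrite (big_cat_nat (leq0n _) hN) /= sum_absorb_mass_late ?addr0.
Qed.

End AbsorptionMass.

Section Evolution.
Variables (F : numFieldType) (y : nat) (z : F).

(* [evolve f n s] sums z^(number of -2 steps) / 2^n * f(endpoint) over the paths of
   length n from s that stay outside {0,1} before time n. *)
Fixpoint evolve (f : nat -> F) (n s : nat) : F :=
  if n is n'.+1 then
    if (s <= 1)%N then 0 else (evolve f n' (s + y) + z * evolve f n' (s - 2)) / 2
  else f s.

Lemma evolve_lin (f g h : nat -> F) (c d : F) :
  (forall s, f s = c * g s + d * h s) ->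
  forall n s, evolve f n s = c * evolve g n s + d * evolve h n s.
Proof.
move=> fE; elim=> [|n IH] s /=; first exact: fE.
by case: ifP => _; rewrite ?IH; ring.
Qed.

Definition stopped_pow (r : F) (s : nat) : F := if (s <= 1)%N then r ^+ s else 0.
Definition running_pow (r : F) (s : nat) : F := if (s <= 1)%N then 0 else r ^+ s.
Definition stopped_one (s : nat) : F := if (s <= 1)%N then 1 else 0.

Lemma evolve_martingale r : r ^+ (y + 2) - 2 * r ^+ 2 + z = 0 ->
  forall N s, \sum_(n < N.+1) evolve (stopped_pow r) n s + evolve (running_pow r) N s
              = r ^+ s.
Proof.
move=> hr; elim=> [|N IH] s.
  by rewrite big_ord1 /= /stopped_pow /running_pow; case: ifP; rewrite ?addr0 ?add0r.
rewrite big_ord_recl /= /stopped_pow; case: (leqP s 1) => hs.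
  by rewrite big1 ?addr0 // => i _ /=; rewrite hs.
under eq_bigr => i _ do rewrite add0n.
rewrite add0r -mulr_suml big_split /= -mulr_sumr -mulrDl addrACA -mulrDr !IH.
case: s hs => [|[|k]] // _; rewrite subSS subSS subn0.
have hr' : r ^+ (y + 2) = 2 * r ^+ 2 - z.
  by apply/eqP; rewrite -subr_eq0 -hr; apply/eqP; ring.
have -> : r ^+ (k.+2 + y) = r ^+ k * r ^+ (y + 2) by rewrite -exprD; congr (_ ^+ _); lia.
have -> : r ^+ k.+2 = r ^+ k * r ^+ 2 by rewrite -exprD addn2.
by rewrite hr'; field.
Qed.

Lemma evolve_geometric_bound f : (1 <= y)%N -> `|z| <= 8^-1 ->
  (forall s, `|f s| <= 2^-1 ^+ s) -> forall N s, `|evolve f N s| <= 2^-1 ^+ (s + N).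
Proof.
move=> hy hz hf; have q0 : (0 : F) <= 2^-1 by rewrite invr_ge0 ler0n.
have q1 : (2^-1 : F) <= 1 by rewrite invf_le1 ?ler1n ?ltr0n.
elim=> [|N IH] s /=; first by rewrite addn0.
case: ifP => hs; first by rewrite normr0 exprn_ge0.
rewrite normrM normfV normr_nat ler_pdivrMr ?ltr0n // addnS exprS.
rewrite mulrAC mulVf ?pnatr_eq0 // mul1r.
have -> : (2^-1 : F) ^+ (s + N) = 2^-1 ^+ (s + N).+1 + 2^-1 ^+ (s + N).+1.
  by rewrite exprS; field.
apply: le_trans (ler_normD _ _) _; rewrite normrM; apply: lerD.
  by apply: le_trans (IH _) _; apply: ler_wiXn2l => //; lia.
have -> : (2^-1 : F) ^+ (s + N).+1 = 8^-1 * 2^-1 ^+ (s - 2 + N).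
  have -> : (8 : F) = 2 ^+ 3 by rewrite -natrX.
  by rewrite -exprVn -exprD; congr (_ ^+ _); lia.
by apply: ler_pM => //; exact: normr_ge0.
Qed.

Lemma evolve_stopped_one_roots (a b : F) : a != b ->
  forall n s, evolve stopped_one n s =
    (1 - b) / (a - b) * evolve (stopped_pow a) n s
    + (a - 1) / (a - b) * evolve (stopped_pow b) n s.
Proof.
move=> ab; apply: evolve_lin => s; rewrite /stopped_one /stopped_pow.
have ab0 : a - b != 0 by rewrite subr_eq0.
by case: s => [|[|s]] /=; rewrite ?mulr0 ?addr0 // ?expr0 ?expr1; field.
Qed.

End Evolution.

Lemma sum_evolve_stopped_one_dist_le (F : numFieldType) y (z a b : F) s N :
  (1 <= y)%N -> `|z| <= 8^-1 -> `|a| <= 2^-1 -> `|b| <= 2^-1 -> a != b ->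
  a ^+ (y + 2) - 2 * a ^+ 2 + z = 0 -> b ^+ (y + 2) - 2 * b ^+ 2 + z = 0 ->
  `|\sum_(n < N.+1) evolve y z (stopped_one F) n s
     - ((1 - b) * a ^+ s + (a - 1) * b ^+ s) / (a - b)|
  <= (`|1 - b| + `|a - 1|) / `|a - b| * 2^-1 ^+ N.
Proof.
move=> hy hz ha hb ab ra rb; have ab0 : a - b != 0 by rewrite subr_eq0.
have running_small (r : F) : `|r| <= 2^-1 -> forall s, `|running_pow r s| <= 2^-1 ^+ s.
  move=> hr t; rewrite /running_pow; case: ifP => _; first by rewrite normr0 exprn_ge0.
  by rewrite normrX lerXn2r // qualifE /= ?normr_ge0 // invr_ge0 ler0n.
have running_le (r : F) : `|r| <= 2^-1 -> `|evolve y z (running_pow r) N s| <= 2^-1 ^+ N.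
  move=> hr; apply: le_trans (evolve_geometric_bound hy hz (running_small r hr) N s) _.
  by apply: ler_wiXn2l; rewrite ?leq_addl // ?invr_ge0 ?ler0n // invf_le1 ?ler1n ?ltr0n.
have -> : \sum_(n < N.+1) evolve y z (stopped_one F) n s
     - ((1 - b) * a ^+ s + (a - 1) * b ^+ s) / (a - b)
   = - ((1 - b) * evolve y z (running_pow a) N s
        + (a - 1) * evolve y z (running_pow b) N s) / (a - b).
  under eq_bigr do rewrite (evolve_stopped_one_roots _ _ ab).
  rewrite big_split /= -!mulr_sumr -(evolve_martingale ra N s) -(evolve_martingale rb N s).
  by field.
rewrite mulNr normrN normrM normfV mulrAC ler_wpM2r ?invr_ge0 ?normr_ge0 //.
by apply: le_trans (ler_normD _ _) _; rewrite !normrM [leRHS]mulrDl; apply: lerD;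
  apply: ler_wpM2l; rewrite ?normr_ge0 ?running_le.
Qed.

Local Open Scope complex_scope.

Lemma evolve_stopped_one_gf (R : realType) y (z : R[i]) n s m : (n <= m)%N ->
  evolve y z (stopped_one R[i]) n s = \sum_(j < m.+1) (absorb_mass R y s n j)%:C * z ^+ j.
Proof.
elim: n s m => [|n IH] s m hnm.
  rewrite big_ord_recl big1 => [|j _]; last by rewrite absorb_mass0 andbF mul0r.
  by rewrite absorb_mass0 andbT /= expr0 mulr1 addr0 /stopped_one; case: ifP.
case: m hnm => [|m] // hnm; rewrite /=; case: ifP => hs.
  by rewrite big1 // => j _; rewrite absorb_massS hs mul0r.
have half_C (x : R) : (x / 2)%:C = x%:C / 2 by rewrite rmorphM /= fmorphV /= rmorph_nat.
under eq_bigr => j _ do rewrite absorb_massS hs half_C rmorphD mulrAC mulrDl.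
rewrite -mulr_suml big_split /= -(IH _ m.+1) ?(ltnW hnm) //; congr ((_ + _) / 2).
rewrite big_ord_recl /= rmorph0 mul0r add0r (IH _ m) // mulr_sumr; apply: eq_bigr => j _.
by rewrite exprS mulrCA.
Qed.

Lemma tail_weight_le (F : numFieldType) j N : (N <= 3 * j)%N ->
  (3 * j + 2)%:R * (256^-1 : F) ^+ j <= 2 / (4 ^ N)%:R.
Proof.
move=> hN; rewrite exprVn -natrX ler_pdivlMr ?ltr0n ?expn_gt0 //.
rewrite mulrAC ler_pdivrMr ?ltr0n ?expn_gt0 // -!natrM ler_nat.
have lin_le_exp : (3 * j + 2 <= 2 * 4 ^ j)%N.
  by elim: j {hN} => [|j IH] //; rewrite expnS; lia.
have -> : (256 ^ j = 4 ^ j * 4 ^ (3 * j))%N by rewrite expnM -expnMn.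
by rewrite mulnA leq_mul // leq_exp2l.
Qed.

Lemma qprob_tail_bound (R : realType) y s (z : R[i]) N j :
  (1 <= y)%N -> `|z| <= 256^-1 ->
  `|(qprob y s j - \sum_(0 <= n < N.+1) absorb_mass R y s n j)%:C * z ^+ j|
  <= 2 / (4 ^ N)%:R.
Proof.
move=> hy hz; rewrite qprob_finite //.
case: (leqP (3 * j + 2) N.+1) => hj.
  rewrite [X in _ - X](big_cat_nat (leq0n _) hj) /= sum_absorb_mass_late // addr0.
  by rewrite subrr mul0r normr0 divr_ge0 ?ler0n.
rewrite (big_cat_nat (leq0n _) (ltnW hj)) /= addrC addrK.
set e := \sum_(N.+1 <= n < 3 * j + 2) _.
have e_ge0 : 0 <= e by apply: sumr_ge0 => n _; case/andP: (absorb_mass_ge0_le1 R y n s j).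
have e_le : e <= (3 * j + 2)%:R.
  apply: le_trans (_ : \sum_(N.+1 <= n < 3 * j + 2) (1 : R) <= _).
    by apply: ler_sum => n _; case/andP: (absorb_mass_ge0_le1 R y n s j).
  by rewrite sumr_const_nat ler_nat; lia.
rewrite normrM normrX ger0_norm ?ler0c //.
apply: le_trans (tail_weight_le _ (_ : N <= 3 * j)%N); last by lia.
apply: ler_pM; rewrite ?ler0c ?exprn_ge0 //.
  by rewrite -(rmorph_nat (real_complex R)) lecR.
by apply: lerXn2r => //; rewrite qualifE /= ?invr_ge0 ?ler0n.
Qed.

Lemma Fpartial_sub_bound (R : realType) y s (z : R[i]) N :
  (1 <= y)%N -> `|z| <= 256^-1 ->
  `|Fpartial y s z N.+1 - \sum_(n < N.+1) evolve y z (stopped_one R[i]) n s|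
  <= 2 * 2^-1 ^+ N.
Proof.
move=> hy hz.
have -> : \sum_(n < N.+1) evolve y z (stopped_one R[i]) n s =
    \sum_(j < N.+1) (\sum_(0 <= n < N.+1) absorb_mass R y s n j)%:C * z ^+ j.
  rewrite (eq_bigr (fun n : 'I_N.+1 => \sum_(j < N.+1) (absorb_mass R y s n j)%:C * z ^+ j)).
    rewrite exchange_big /=; apply: eq_bigr => j _.
    by rewrite big_mkord rmorph_sum /= mulr_suml.
  by move=> n _; apply: evolve_stopped_one_gf; rewrite -ltnS.
rewrite /Fpartial big_mkord -sumrB.
apply: le_trans (ler_norm_sum _ _ _) _.
apply: le_trans (_ : \sum_(j < N.+1) (2 / (4 ^ N)%:R : R[i]) <= _).
  by apply: ler_sum => j _; rewrite -mulrBl -rmorphB; exact: qprob_tail_bound.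
rewrite sumr_const card_ord exprVn -natrX -[_ *+ N.+1]mulr_natr.
rewrite ler_pdivlMr ?ltr0n ?expn_gt0 //.
have -> : 2 / (4 ^ N)%:R * N.+1%:R * (2 ^ N)%:R = 2 * N.+1%:R * (2 ^ N)%:R / (4 ^ N)%:R :> R[i].
  by ring.
rewrite ler_pdivrMr ?ltr0n ?expn_gt0 //.
rewrite -!natrM ler_nat.
have -> : (4 ^ N = 2 ^ N * 2 ^ N)%N by rewrite -expnMn.
by rewrite mulnAC -mulnA leq_mul2l /= leq_mul // ltn_expl.
Qed.

Local Open Scope classical_set_scope.

Lemma cvg_geometric_rate (R : realType) (u : nat -> R[i]) (L C : R[i]) :
  (forall N, `|u N - L| <= C * 2^-1 ^+ N) -> u @ \oo --> L.
Proof.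
move=> hu; have C_ge0 : 0 <= C by have := hu 0%N; rewrite expr0 mulr1; exact/le_trans.
apply/cvgrPdist_lt => e e_gt0.
have realE (x : R[i]) : 0 <= x -> x = (complex.Re x)%:C by move=> x0; rewrite RRe_real // ger0_real.
have Re_e_gt0 : 0 < complex.Re e by rewrite -ltcR -realE // ltW.
have half_lt1 : `|2^-1 : R| < 1.
  by rewrite ger0_norm ?invr_ge0 ?ler0n // invf_lt1 ?ltr0n // ltr1n.
near=> N; rewrite distrC; apply: le_lt_trans (hu N) _.
rewrite (realE C) // (realE e) ?ltW // (_ : 2^-1 = (2^-1 : R)%:C).
  rewrite -rmorphXn -rmorphM ltcR; apply: le_lt_trans (ler_norm _) _.
  by near: N; exact: cvgr0_norm_lt _ (cvg_geometric _ half_lt1) _ Re_e_gt0.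
by rewrite fmorphV /= rmorph_nat.
Unshelve. all: by end_near.
Qed.

Theorem mainTheorem3 (R : realType) (y s : nat) (a b : R[i] -> R[i]) :
  (1 <= y)%N ->
  (* a(z), b(z) are two distinct roots of x^(y+2) - 2x^2 + z for z near 0, z <> 0 ... *)
  (\forall z \near (0 : R[i])^',
      [/\ a z ^+ (y + 2) - 2 * a z ^+ 2 + z = 0,
          b z ^+ (y + 2) - 2 * b z ^+ 2 + z = 0 & a z != b z]) ->
  (* ... both tending to 0 as z -> 0 (the two small roots) *)
  a z @[z --> (0 : R[i])^'] --> (0 : R[i]) ->
  b z @[z --> (0 : R[i])^'] --> (0 : R[i]) ->
  \forall z \near (0 : R[i])^',
     Fpartial y s z @ \oo -->
       ((1 - b z) * a z ^+ s + (a z - 1) * b z ^+ s) / (a z - b z)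
     /\ (s = 2%N ->
         ((1 - b z) * a z ^+ s + (a z - 1) * b z ^+ s) / (a z - b z)
           = a z + b z - a z * b z).
Proof.
move=> hy roots a0 b0.
have half_gt0 : (0 : R[i]) < 2^-1 by rewrite invr_gt0 ltr0n.
have z_small := @dnbhs0_le _ R[i] 256^-1.
near=> z.
have [ra rb ab] : [/\ a z ^+ (y + 2) - 2 * a z ^+ 2 + z = 0,
    b z ^+ (y + 2) - 2 * b z ^+ 2 + z = 0 & a z != b z] by near: z.
have az : `|a z| <= 2^-1 by near: z; exact: cvgr0_norm_le a0 _ half_gt0.
have bz : `|b z| <= 2^-1 by near: z; exact: cvgr0_norm_le b0 _ half_gt0.
have hz : `|z| <= 256^-1 by near: z; apply: z_small; rewrite invr_gt0 ltr0n.
have hz8 : `|z| <= 8^-1 by apply: le_trans hz _; rewrite lef_pV2 ?ler_nat // qualifE /= ltr0n.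
split=> [|->]; last by field; rewrite subr_eq0.
rewrite -cvg_shiftS.
apply: (cvg_geometric_rate (C := 2 + (`|1 - b z| + `|a z - 1|) / `|a z - b z|)) => N /=.
rewrite [leRHS]mulrDl -(subrK (\sum_(n < N.+1) evolve y z (stopped_one R[i]) n s) (Fpartial _ _ _ _)).
rewrite -addrA; apply: le_trans (ler_normD _ _) _; apply: lerD.
  exact: Fpartial_sub_bound.
exact: sum_evolve_stopped_one_dist_le.
Unshelve. all: by end_near.
Qed.
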